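(* Let $X$ be a topological space. For every irreducible closed subset $C$ of $X$, let $e_C:\mathcal OX\to[0,\infty]$ map every open $U$ to $1$ if $U\cap C\neq\emptyset$ and to $0$ otherwise. Then $e_C$ is a point-continuous valuation. If $C$ is the closure of $\{x\}$ for some point $x$, then $e_C=\delta_x$.
   Context: A non-empty subset $A$ is irreducible if $A\subseteq B\cup C$ with $B,C$ closed implies $A\subseteq B$ or $A\subseteq C$. A valuation is a map $\mathcal OX\to[0,\infty]$ with value $0$ on $\emptyset$, monotone and modular. It is point-continuous if for every open $U$ and real $r$ with $0\le r<\nu(U)$ there is a finite $A\subseteq U$ with $\nu(V)>r$ for every open $V\supseteq A$. $\delta_x$ is the Dirac valuation: $\delta_x(U)=1$ if $x\in U$, else $0$. *)

From HB Require Import structures.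
From mathcomp Require Import all_boot all_order all_algebra.
From mathcomp Require Import all_classical all_reals topology.
Set Implicit Arguments. Unset Strict Implicit. Unset Printing Implicit Defensive.
Import Order.TTheory GRing.Theory Num.Theory.
Local Open Scope classical_set_scope.
Local Open Scope ring_scope.
Local Open Scope ereal_scope.

(* Set functions on X are modelled as maps set X -> \bar R; only their values
   on open sets matter (O X is the lattice of open sets). *)

Definition irreducible (X : topologicalType) (A : set X) : Prop :=
  A !=set0 /\
  forall B C : set X, closed B -> closed C -> A `<=` B `|` C ->
    A `<=` B \/ A `<=` C.

Definition valuation (R : realType) (X : topologicalType)
  (nu : set X -> \bar R) : Prop :=
  [/\ forall U, open U -> 0 <= nu U,
      nu set0 = 0,
      forall U V, open U -> open V -> U `<=` V -> nu U <= nu V &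
      forall U V, open U -> open V -> nu U + nu V = nu (U `|` V) + nu (U `&` V)].

Definition point_continuous (R : realType) (X : topologicalType)
  (nu : set X -> \bar R) : Prop :=
  forall (U : set X) (r : R), open U -> (0 <= r)%R -> r%:E < nu U ->
    exists A : set X, [/\ finite_set A, A `<=` U &
      forall V : set X, open V -> A `<=` V -> r%:E < nu V].

Definition dirac_val (R : realType) (X : topologicalType) (x : X)
  (U : set X) : \bar R :=
  if pselect (U x) then 1 else 0.

Definition e_closed (R : realType) (X : topologicalType) (C : set X)
  (U : set X) : \bar R :=
  if pselect (U `&` C !=set0) then 1 else 0.

From HB Require Import structures.
From mathcomp Require Import all_boot all_order all_algebra.
From mathcomp Require Import all_classical all_reals topology.
Import Order.TTheory Num.Theory.
Local Open Scope classical_set_scope.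
Local Open Scope ereal_scope.

(* Monotonicity and point-continuity hold
   for any C (a single point of U `&` C is a finite witness).  Modularity
   reduces to the identity b + b' = (b || b') + (b && b') on booleans, once one
   knows that U `&` V meets C as soon as U and V do: otherwise C would be
   covered by the closed sets ~` U and ~` V without lying in either.  An open
   set meets the closure of {x} iff it contains x. *)

Section Meets.
Context {X : topologicalType}.
Implicit Types A C U V : set X.

Lemma irreducible_setI_neq0 C U V : irreducible C -> open U -> open V ->
  U `&` C !=set0 -> V `&` C !=set0 -> U `&` V `&` C !=set0.
Proof.
move=> [_ irrC] oU oV [u [Uu Cu]] [v [Vv Cv]].
apply: contrapT => UVC0.
have CUV : C `<=` ~` U `|` ~` V.
  move=> c Cc; have [Uc|] := pselect (U c); last by left.
  by right=> Vc; apply: UVC0; exists c.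
by case: (irrC _ _ (open_closedC oU) (open_closedC oV) CUV) => [/(_ u Cu)|/(_ v Cv)].
Qed.

Lemma setIUl_neq0 C U V : (U `|` V) `&` C !=set0 <-> U `&` C !=set0 \/ V `&` C !=set0.
Proof.
rewrite setIUl; split=> [[x [UCx|VCx]]|[[x UCx]|[x VCx]]].
- by left; exists x.
- by right; exists x.
- by exists x; left.
- by exists x; right.
Qed.

Lemma open_setI_closure_neq0 A U : open U -> U `&` closure A !=set0 -> U `&` A !=set0.
Proof.
move=> oU [y [Uy Ay]].
have [z [Az Uz]] := Ay U (open_nbhs_nbhs (conj oU Uy)).
by exists z.
Qed.

End Meets.

Section EClosed.
Variables (R : realType) (X : topologicalType) (C : set X).

Lemma e_closedE U : e_closed R C U = (`[< U `&` C !=set0 >])%:R%:E.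
Proof.
by rewrite /e_closed; case: pselect => UC; [rewrite asboolT|rewrite asboolF].
Qed.

Lemma e_closed_ge0 U : 0 <= e_closed R C U.
Proof. by rewrite e_closedE lee_fin. Qed.

Lemma e_closed0 : e_closed R C set0 = 0.
Proof. by rewrite e_closedE asboolF // set0I => -[]. Qed.

Lemma le_e_closed U V : U `<=` V -> e_closed R C U <= e_closed R C V.
Proof.
move=> UV; rewrite !e_closedE lee_fin ler_nat.
case: (asboolP (U `&` C !=set0)) => [[x [Ux Cx]]|//].
by rewrite asboolT //; exists x; split => //; apply: UV.
Qed.

Lemma e_closed_modular U V : irreducible C -> open U -> open V ->
  e_closed R C U + e_closed R C V =
  e_closed R C (U `|` V) + e_closed R C (U `&` V).
Proof.
move=> irrC oU oV.
have meetI : U `&` V `&` C !=set0 <-> U `&` C !=set0 /\ V `&` C !=set0.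
  split=> [[x [[Ux Vx] Cx]]|[]]; last exact: irreducible_setI_neq0.
  by split; exists x.
rewrite !e_closedE (propext (setIUl_neq0 C U V)) (propext meetI) asbool_or asbool_and.
by case: asbool; case: asbool; rewrite /= ?adde0 ?add0e.
Qed.

Lemma e_closed_valuation : irreducible C -> valuation (e_closed R C).
Proof.
move=> irrC; split=> [U _||U V _ _|U V oU oV].
- exact: e_closed_ge0.
- exact: e_closed0.
- exact: le_e_closed.
- exact: e_closed_modular.
Qed.

Lemma e_closed_point_continuous : point_continuous (e_closed R C).
Proof.
move=> U r _ r_ge0; rewrite e_closedE.
case: (asboolP (U `&` C !=set0)) => [[x [Ux Cx]] r_lt1|_]; last first.
  by rewrite lte_fin ltNge r_ge0.
exists [set x]; split=> [|y ->//|V _ Vx]; first exact: finite_set1.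
have VC : V `&` C !=set0 by exists x; split => //; apply: Vx.
by rewrite e_closedE asboolT.
Qed.

End EClosed.

Lemma e_closure_set1 (R : realType) (X : topologicalType) (x : X) (U : set X) :
  open U -> e_closed R (closure [set x]) U = dirac_val R x U.
Proof.
move=> oU; rewrite e_closedE /dirac_val; case: pselect => [Ux|Ux].
  by rewrite asboolT //; exists x; split => //; apply: subset_closure.
rewrite asboolF // => /(open_setI_closure_neq0 _ _ oU) [y [Uy /= yx]]; apply: Ux.
by rewrite -yx.
Qed.

Theorem lemma4p1 (R : realType) (X : topologicalType) (C : set X) :
  closed C -> irreducible C ->
  (valuation (e_closed R C) /\ point_continuous (e_closed R C)) /\
  (forall x : X, C = closure [set x] ->
     forall U : set X, open U -> e_closed R C U = dirac_val R x U).
Proof.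
move=> _ irrC; split; first split.
- exact: e_closed_valuation.
- exact: e_closed_point_continuous.
- by move=> x -> U oU; apply: e_closure_set1.
Qed.
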